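(* Let $\lambda$ be counting measure on $\mathbb{N}$, and let $X_1(\lambda),X_2(\lambda),Y_1(\lambda),Y_2(\lambda)$ be saturated Banach sequence spaces in each of which the unit vectors $(e^n)$ form a Schauder basis; assume also that $(e^n)$ is a Schauder basis of $Y_1(\lambda)'$. Let $T\colon X_1(\lambda)\to Y_1(\lambda)$ and $S\colon X_2(\lambda)\to Y_2(\lambda)$ be nontrivial continuous linear operators with matrices $a_{ij}=T(e^j)_i$ and $b_{ij}=S(e^j)_i$. Assume that $Y_2^{Y_1''}$ is saturated and that $Y_2(\lambda)$ or $Y_1(\lambda)'$ is $\sigma$-order continuous. Given $h=(h_j)\in X_1^{X_2}$, the following are equivalent: (a) $T$ factors strongly through $S$ and $M_h$, i.e. there exists $g\in Y_2^{Y_1''}$ with $T(x)=g\,S(hx)$ for all $x\in X_1(\lambda)$. (b) There exists $g=(g_i)\in Y_2^{Y_1''}$ such that $a_{ij}/b_{ij}=g_ih_j$ whenever $b_{ij}\ne0$, and $a_{ij}=0$ whenever $b_{ij}=0$. (c) There exists $C>0$ such that $$\sum_{i=1}^n\sum_{j=1}^m r_{ij}a_{ij}\le C\Big\Vert\sum_{i=1}^n\Big(\sum_{j=1}^m h_jr_{ij}b_{ij}\Big)e^i\Big\Vert_{Y_2\pi Y_1'}$$ for all $n,m\in\mathbb{N}$ and all real $(r_{ij})$ with $|r_{ij}|\le1$. Moreover, if $Y_2(\lambda)\subset Y_1(\lambda)''$, then the condition (d) there exists $C>0$ such that $\sum_{j=1}^m r_ja_{nj}\le C\big|\sum_{j=1}^m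 h_jr_jb_{nj}\big|$ for all $n,m\in\mathbb{N}$ and all real $(r_j)$ with $|r_j|\le1$ implies (a)–(c). If moreover $Y_2^{Y_1''}=\ell^\infty$, then (d) is equivalent to (a)–(c).
   Context: A Banach sequence space is a Banach function space over counting measure on $\mathbb{N}$: a Banach space of real sequences such that $|x|\le|y|$ coordinatewise with $y$ in the space implies $x$ in the space and $\Vert x\Vert\le\Vert y\Vert$; saturated means for each $n$ some element has nonzero $n$-th coordinate; $\sigma$-order continuous means $x_k\downarrow0$ coordinatewise implies $\Vert x_k\Vert\downarrow0$. $X^Y=\{h: hx\in Y\ \forall x\in X\}$ with norm $\sup_{x\in B_X}\Vert hx\Vert_Y$; $X'=X^{\ell^1}$ (Köthe dual), $X''=(X')'$. The $\pi$-product $X\pi Y$ is the space of $h$ with $|h|\le\sum_n|f_ng_n|$ for some $f_n\in X$, $g_n\in Y$, $\sum_n\Vert f_n\Vert_X\Vert g_n\Vert_Y<\infty$, with norm the infimum of $\sum_n\Vert f_n\Vert_X\Vert g_n\Vert_Y$. *)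

From Stdlib Require Import Reals.
From Coquelicot Require Import Coquelicot.
Open Scope R_scope.

(* Real sequences indexed by nat (counting measure on N; index 0 plays the
   role of the paper's index 1). *)
Definition seq := nat -> R.

Record sspace := SSpace { smem : seq -> Prop; snorm : seq -> R }.

Definition zero_seq : seq := fun _ => 0.
Definition sadd (x y : seq) : seq := fun i => x i + y i.
Definition sscal (c : R) (x : seq) : seq := fun i => c * x i.
Definition ssub (x y : seq) : seq := fun i => x i - y i.
Definition smul (x y : seq) : seq := fun i => x i * y i.

Definition unitv (n : nat) : seq := fun i => if Nat.eqb i n then 1 else 0.

Fixpoint fsum (n : nat) (f : nat -> R) : R :=
  match n with O => 0 | S k => fsum k f + f k end.

Definition fsum_seq (K : nat) (a : nat -> R) (b : nat -> seq) : seq :=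
  fun i => fsum K (fun k => a k * b k i).

Definition BSS (X : sspace) : Prop :=
  smem X zero_seq /\
  (forall x y, smem X x -> smem X y -> smem X (sadd x y)) /\
  (forall c x, smem X x -> smem X (sscal c x)) /\
  (forall x, smem X x -> 0 <= snorm X x) /\
  (forall x, smem X x -> snorm X x = 0 -> x = zero_seq) /\
  (forall c x, smem X x -> snorm X (sscal c x) = Rabs c * snorm X x) /\
  (forall x y, smem X x -> smem X y ->
     snorm X (sadd x y) <= snorm X x + snorm X y) /\
  (forall x y, smem X y -> (forall i, Rabs (x i) <= Rabs (y i)) ->
     smem X x /\ snorm X x <= snorm X y) /\
  (forall xs : nat -> seq, (forall k, smem X (xs k)) ->
     (forall eps, 0 < eps -> exists N, forall p q, (N <= p)%nat -> (N <= q)%nat ->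
        snorm X (ssub (xs p) (xs q)) < eps) ->
     exists x, smem X x /\
       (forall eps, 0 < eps -> exists N, forall p, (N <= p)%nat ->
          snorm X (ssub (xs p) x) < eps)).

Definition saturated (X : sspace) : Prop :=
  forall n : nat, exists x, smem X x /\ x n <> 0.

Definition sigma_order_continuous (X : sspace) : Prop :=
  forall xs : nat -> seq, (forall k, smem X (xs k)) ->
    (forall k i, 0 <= xs (S k) i <= xs k i) ->
    (forall i, is_lim_seq (fun k => xs k i) 0) ->
    is_lim_seq (fun k => snorm X (xs k)) 0.

Definition schauder_basis (X : sspace) (b : nat -> seq) : Prop :=
  (forall n, smem X (b n)) /\
  forall x, smem X x ->
    exists! a : nat -> R,
      forall eps, 0 < eps -> exists N, forall K, (N <= K)%nat ->
        snorm X (ssub x (fsum_seq K a b)) < eps.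

Definition l1 : sspace :=
  SSpace (fun x => ex_series (fun n => Rabs (x n)))
         (fun x => Series (fun n => Rabs (x n))).

Definition mult_space (X Y : sspace) : sspace :=
  SSpace (fun h => forall x, smem X x -> smem Y (smul h x))
         (fun h => real (Lub_Rbar (fun r => exists x, smem X x /\
                     snorm X x <= 1 /\ r = snorm Y (smul h x)))).

Definition kothe (X : sspace) : sspace := mult_space X l1.

Definition abs_series (u : nat -> R) : Rbar :=
  Lub_Rbar (fun s => exists N, s = fsum N (fun n => Rabs (u n))).

Definition pi_rep (X Y : sspace) (h : seq) (f g : nat -> seq) : Prop :=
  (forall n, smem X (f n)) /\ (forall n, smem Y (g n)) /\
  ex_series (fun n => snorm X (f n) * snorm Y (g n)) /\
  (forall i, Rbar_le (Finite (Rabs (h i))) (abs_series (fun n => f n i * g n i))).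

Definition pi_mem (X Y : sspace) (h : seq) : Prop :=
  exists f g, pi_rep X Y h f g.

(* pi-norm, +oo if h is not in X pi Y *)
Definition pi_norm (X Y : sspace) (h : seq) : Rbar :=
  Glb_Rbar (fun c => exists f g, pi_rep X Y h f g /\
              c = Series (fun n => snorm X (f n) * snorm Y (g n))).

Definition bounded_linear (X Y : sspace) (T : seq -> seq) : Prop :=
  (forall x, smem X x -> smem Y (T x)) /\
  (forall x y, smem X x -> smem X y -> T (sadd x y) = sadd (T x) (T y)) /\
  (forall c x, smem X x -> T (sscal c x) = sscal c (T x)) /\
  (exists K, forall x, smem X x -> snorm Y (T x) <= K * snorm X x).

Definition nontrivial_op (X : sspace) (T : seq -> seq) : Prop :=
  exists x, smem X x /\ T x <> zero_seq.

Definition op_matrix (T : seq -> seq) (i j : nat) : R := T (unitv j) i.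

(* If T = M_g o S o M_h, evaluating at the unit vectors gives a_ij = g_i h_j b_ij; conversely
   this matrix identity gives the factorization, because the unit vectors are Schauder bases and
   T x is the coordinatewise limit of the sums of x_k T(e^k).  So everything reduces to the
   identity a_ij = g_i h_j b_ij with g in Y2^{Y1''}.
   For (b) => (c): a multiplier g : Y2 -> Y1'' satisfies sum_i |g_i y_i z_i| <= M |y| |z| on
   Y2 x Y1', by a gliding hump (if it failed on the unit balls, the sums of 2^-k |y_k| and of
   2^-k |z_k| would converge, in Y2 and in Y1', to a pair Y, Z with sum_i |g_i Y_i Z_i| = oo);
   summing this bound along a representation in Y2 pi Y1' bounds the left side of (c).
   For (c) => (b): testing (c) on one row with sum_j r_j h_j b_ij = 0 makes row i of a
   proportional to (h_j b_ij)_j, and testing it on one entry per row with suitable weights shows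
   that the factors g_i form a multiplier into Y1''.  Condition (d) gives the same row
   proportionality with |g_i| <= C, and bounded multipliers map Y2 into Y1'' when Y2 is
   contained in Y1''. *)

From Stdlib Require Import Reals.
From Coquelicot Require Import Coquelicot.
From Stdlib Require Import Lra Lia FunctionalExtensionality Classical IndefiniteDescription.
Open Scope R_scope.

(** * Finite sums and series *)

Lemma fsum_ext n f g : (forall k, (k < n)%nat -> f k = g k) -> fsum n f = fsum n g.
Proof.
  induction n as [|n IH]; simpl; intros H; [reflexivity|].
  rewrite IH, H; [reflexivity|lia|intros; apply H; lia].
Qed.

Lemma fsum_plus n f g : fsum n (fun k => f k + g k) = fsum n f + fsum n g.
Proof. induction n as [|n IH]; simpl; [lra|]. rewrite IH; ring. Qed.

Lemma fsum_scal_l n c f : fsum n (fun k => c * f k) = c * fsum n f.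
Proof. induction n as [|n IH]; simpl; [ring|]. rewrite IH; ring. Qed.

Lemma fsum_eq_0 n f : (forall k, (k < n)%nat -> f k = 0) -> fsum n f = 0.
Proof.
  induction n as [|n IH]; simpl; intros H; [reflexivity|].
  rewrite IH, H; [ring|lia|intros; apply H; lia].
Qed.

Lemma fsum_le n f g : (forall k, (k < n)%nat -> f k <= g k) -> fsum n f <= fsum n g.
Proof.
  induction n as [|n IH]; simpl; intros H; [lra|].
  apply Rplus_le_compat; [apply IH; intros; apply H|apply H]; lia.
Qed.

Lemma fsum_nonneg n f : (forall k, 0 <= f k) -> 0 <= fsum n f.
Proof. intros H. rewrite <- (fsum_eq_0 n (fun _ => 0)) by auto. apply fsum_le; auto. Qed.

Lemma fsum_le_len n p f : (forall k, 0 <= f k) -> (n <= p)%nat -> fsum n f <= fsum p f.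
Proof. intros H Hp. induction Hp; simpl; [lra|]. specialize (H m); lra. Qed.

Lemma term_le_fsum n f k : (forall k, 0 <= f k) -> (k < n)%nat -> f k <= fsum n f.
Proof.
  intros H Hk. apply Rle_trans with (fsum (S k) f); [|apply fsum_le_len; auto].
  simpl. pose proof (fsum_nonneg k f H); lra.
Qed.

Lemma fsum_swap n K (F : nat -> nat -> R) :
  fsum n (fun i => fsum K (F i)) = fsum K (fun k => fsum n (fun i => F i k)).
Proof.
  induction n as [|n IH]; simpl; [symmetry; apply fsum_eq_0; auto|].
  rewrite IH, <- fsum_plus. reflexivity.
Qed.

Lemma fsum_delta n j u f : (j < n)%nat ->
  fsum n (fun k => (if Nat.eqb k j then u else 0) * f k) = u * f j.
Proof.
  induction n as [|n IH]; intros Hj; [lia|]. simpl. destruct (Nat.eqb_spec n j) as [->|Hne].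
  - rewrite fsum_eq_0; [ring|]. intros k Hk. destruct (Nat.eqb_spec k j); [lia|ring].
  - rewrite IH by lia. ring.
Qed.

Lemma fsum_unitv n F k : fsum n (fun i => F i * unitv i k) = if Nat.ltb k n then F k else 0.
Proof.
  unfold unitv. induction n as [|n IH]; simpl; [reflexivity|]. rewrite IH.
  destruct (Nat.eqb_spec k n), (Nat.ltb_spec k n), (Nat.ltb_spec k (S n)); subst; try lia; ring.
Qed.

Lemma bounded_below_all n (P : nat -> nat -> Prop) :
  (forall i K K', (K <= K')%nat -> P i K -> P i K') -> (forall i, exists K, P i K) ->
  exists K, forall i, (i < n)%nat -> P i K.
Proof.
  intros Hmono Hex. induction n as [|n [K HK]]; [exists 0%nat; intros; lia|].
  destruct (Hex n) as [Kn HKn]. exists (Nat.max K Kn). intros i Hi.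
  destruct (Nat.eq_dec i n) as [->|Hne].
  - apply (Hmono n Kn); [lia|assumption].
  - apply (Hmono i K); [lia|apply HK; lia].
Qed.

Lemma is_series_fsum a l : is_series a l <-> is_lim_seq (fun N => fsum N a) (Finite l).
Proof.
  assert (E : forall n, fsum (S n) a = sum_n a n).
  { induction n; simpl in *; [rewrite sum_O; ring|]. rewrite sum_Sn, <- IHn. reflexivity. }
  unfold is_series. change (is_lim_seq (sum_n a) l <-> is_lim_seq (fun N => fsum N a) l).
  rewrite (is_lim_seq_incr_1 (fun N => fsum N a)).
  split; apply is_lim_seq_ext; intros; rewrite E; reflexivity.
Qed.

Lemma fsum_le_Series a N : (forall n, 0 <= a n) -> ex_series a -> fsum N a <= Series a.
Proof.
  intros Hp He. apply Series_correct, is_series_fsum in He.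
  apply (is_lim_seq_incr_compare _ _ He). intros n; simpl; specialize (Hp n); lra.
Qed.

Lemma term_le_Series a k : (forall n, 0 <= a n) -> ex_series a -> a k <= Series a.
Proof. intros. eapply Rle_trans; [apply (term_le_fsum (S k)); auto|apply fsum_le_Series; auto]. Qed.

Lemma ex_series_of_fsum_bounded a B : (forall n, 0 <= a n) -> (forall N, fsum N a <= B) ->
  ex_series a /\ Series a <= B.
Proof.
  intros Hp HB. destruct (ex_finite_lim_seq_incr (fun N => fsum N a) B) as [l Hl]; auto.
  { intros n; simpl; specialize (Hp n); lra. }
  assert (Hs : is_series a l) by (apply is_series_fsum; auto).
  split; [exists l; auto|]. rewrite (is_series_unique _ _ Hs).
  apply (is_lim_seq_le _ _ _ _ HB Hl (is_lim_seq_const B)).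
Qed.

Lemma is_series_single a i : (forall n, n <> i -> a n = 0) -> is_series a (a i).
Proof.
  intros H. apply is_series_fsum, is_lim_seq_ext_loc with (fun _ => a i); [|apply is_lim_seq_const].
  exists (S i). intros n Hn. induction Hn; simpl.
  - rewrite fsum_eq_0; [ring|]. intros; apply H; lia.
  - rewrite <- IHHn, (H m); [ring|lia].
Qed.

Lemma Series_0 : Series (fun _ : nat => 0) = 0.
Proof. apply is_series_unique, (is_series_single (fun _ => 0) 0). auto. Qed.

Lemma Series_fsum N (F : nat -> nat -> R) : (forall i, ex_series (F i)) ->
  ex_series (fun k => fsum N (fun i => F i k)) /\
  Series (fun k => fsum N (fun i => F i k)) = fsum N (fun i => Series (F i)).
Proof.
  intros H. induction N as [|N [E1 E2]]; simpl.
  - split; [exists 0; apply (is_series_single (fun _ => 0) 0); auto|apply Series_0].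
  - split; [apply (ex_series_plus _ _ E1 (H N))|]. rewrite Series_plus, E2; auto.
Qed.

Lemma is_series_geom_half c : is_series (fun k => c * (/2)^k) (2 * c).
Proof.
  replace (2 * c) with (c * / (1 - /2)) by field.
  apply (@is_series_scal_l R_AbsRing R_NormedModule), is_series_geom. rewrite Rabs_pos_eq; lra.
Qed.

Lemma Series_unitv z i : Series (fun n => Rabs (z n * unitv i n)) = Rabs (z i).
Proof.
  erewrite is_series_unique; [|apply is_series_single].
  - unfold unitv. rewrite Nat.eqb_refl, Rmult_1_r. reflexivity.
  - intros n Hn. unfold unitv. destruct (Nat.eqb_spec n i); [lia|]. rewrite Rmult_0_r; apply Rabs_R0.
Qed.

Lemma Rle_of_slack x y A : 0 <= A -> (forall d, 0 < d -> x <= y + d * A) -> x <= y.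
Proof.
  intros HA H. apply Rle_plus_epsilon. intros eps Heps.
  specialize (H (eps / (A + 1)) ltac:(apply Rdiv_lt_0_compat; lra)).
  assert (eps / (A + 1) * A <= eps).
  { apply Rmult_le_reg_r with (A + 1); [lra|]. field_simplify; nra. }
  lra.
Qed.

Lemma Rle_of_shift x a A : 0 <= A -> (forall d, 0 < d -> x <= A * (a + d)) -> x <= A * a.
Proof.
  intros HA H. apply (Rle_of_slack _ _ A HA). intros d Hd.
  replace (A * a + d * A) with (A * (a + d)) by ring. auto.
Qed.

Lemma is_lim_seq_unique_R u (a b : R) : is_lim_seq u a -> is_lim_seq u b -> a = b.
Proof.
  intros Ha Hb. apply is_lim_seq_unique in Ha, Hb. rewrite Ha in Hb. injection Hb. auto.
Qed.

(** * Banach sequence spaces *)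

Definition norm_cv (X : sspace) (s : nat -> seq) (x : seq) : Prop :=
  forall eps, 0 < eps -> exists N, forall p, (N <= p)%nat -> snorm X (ssub (s p) x) < eps.

Section BanachSequenceSpace.
Variable X : sspace.
Hypothesis HX : BSS X.

Lemma bss_mem_zero : smem X zero_seq. Proof. apply HX. Qed.
Lemma bss_mem_add x y : smem X x -> smem X y -> smem X (sadd x y). Proof. apply HX. Qed.
Lemma bss_mem_scal c x : smem X x -> smem X (sscal c x). Proof. apply HX. Qed.
Lemma bss_norm_pos x : smem X x -> 0 <= snorm X x. Proof. apply HX. Qed.
Lemma bss_norm_def x : smem X x -> snorm X x = 0 -> x = zero_seq. Proof. apply HX. Qed.
Lemma bss_norm_scal c x : smem X x -> snorm X (sscal c x) = Rabs c * snorm X x.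
Proof. apply HX. Qed.
Lemma bss_norm_triang x y : smem X x -> smem X y ->
  snorm X (sadd x y) <= snorm X x + snorm X y.
Proof. apply HX. Qed.
Lemma bss_ideal x y : smem X y -> (forall i, Rabs (x i) <= Rabs (y i)) ->
  smem X x /\ snorm X x <= snorm X y.
Proof. apply HX. Qed.
Lemma bss_complete xs : (forall k, smem X (xs k)) ->
  (forall eps, 0 < eps -> exists N, forall p q, (N <= p)%nat -> (N <= q)%nat ->
     snorm X (ssub (xs p) (xs q)) < eps) ->
  exists x, smem X x /\ norm_cv X xs x.
Proof. apply HX. Qed.

Lemma bss_norm_zero : snorm X zero_seq = 0.
Proof.
  replace zero_seq with (sscal 0 zero_seq) by (extensionality i; unfold sscal, zero_seq; ring).
  rewrite bss_norm_scal by apply bss_mem_zero. rewrite Rabs_R0; ring.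
Qed.

Lemma bss_mem_sub x y : smem X x -> smem X y -> smem X (ssub x y).
Proof.
  intros. replace (ssub x y) with (sadd x (sscal (-1) y))
    by (extensionality i; unfold ssub, sadd, sscal; ring).
  apply bss_mem_add, bss_mem_scal; auto.
Qed.

Lemma bss_norm_sub_sym x y : smem X x -> smem X y -> snorm X (ssub x y) = snorm X (ssub y x).
Proof.
  intros. replace (ssub x y) with (sscal (-1) (ssub y x))
    by (extensionality i; unfold ssub, sscal; ring).
  rewrite bss_norm_scal, Rabs_m1 by (apply bss_mem_sub; auto). ring.
Qed.

Lemma bss_mem_abs x : smem X x ->
  smem X (fun i => Rabs (x i)) /\ snorm X (fun i => Rabs (x i)) <= snorm X x.
Proof. intros; apply bss_ideal; auto. intros; rewrite Rabs_Rabsolu; lra. Qed.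

Lemma coord_norm_le i x : smem X (unitv i) -> smem X x ->
  Rabs (x i) * snorm X (unitv i) <= snorm X x.
Proof.
  intros Hu Hx. rewrite <- bss_norm_scal by exact Hu. apply bss_ideal; auto.
  intros k. unfold sscal, unitv. destruct (Nat.eqb_spec k i) as [->|].
  - rewrite Rmult_1_r; lra.
  - rewrite Rmult_0_r, Rabs_R0. apply Rabs_pos.
Qed.

Hypothesis unitv_mem : forall i, smem X (unitv i).

Lemma unitv_norm_pos i : 0 < snorm X (unitv i).
Proof.
  destruct (bss_norm_pos _ (unitv_mem i)) as [|E]; auto.
  apply eq_sym, bss_norm_def in E; [|apply unitv_mem].
  assert (E1 : unitv i i = zero_seq i) by (rewrite E; reflexivity).
  unfold unitv, zero_seq in E1. rewrite Nat.eqb_refl in E1. lra.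
Qed.

Lemma norm_cv_coord s y i : (forall p, smem X (s p)) -> smem X y -> norm_cv X s y ->
  is_lim_seq (fun p => s p i) (y i).
Proof.
  intros Hs Hy Hc. apply is_lim_seq_Reals. intros eps Heps.
  pose proof (unitv_norm_pos i) as Hu.
  destruct (Hc (eps * snorm X (unitv i))) as [N HN]; [apply Rmult_lt_0_compat; auto|].
  exists N. intros n Hn. unfold R_dist. apply Rmult_lt_reg_r with (snorm X (unitv i)); auto.
  eapply Rle_lt_trans; [apply (coord_norm_le i (ssub (s n) y))|apply HN; lia]; auto.
  apply bss_mem_sub; auto.
Qed.

Lemma bss_mem_fsum_seq K c b : (forall k, smem X (b k)) -> smem X (fsum_seq K c b).
Proof.
  intros Hb. induction K as [|K IH]; [apply bss_mem_zero|].
  change (smem X (sadd (fsum_seq K c b) (sscal (c K) (b K)))). apply bss_mem_add, bss_mem_scal; auto.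
Qed.

Lemma geometric_partial_sums_le zs p q : (forall k, smem X (zs k)) -> (forall k, snorm X (zs k) <= 1) ->
  (p <= q)%nat ->
  snorm X (ssub (fsum_seq q (fun k => (/2)^k) zs) (fsum_seq p (fun k => (/2)^k) zs))
  <= 2 * (/2)^p - 2 * (/2)^q.
Proof.
  intros Hz Hn Hpq. set (s := fun p => fsum_seq p (fun k => (/2)^k) zs).
  change (snorm X (ssub (s q) (s p)) <= 2 * (/2)^p - 2 * (/2)^q).
  assert (Hs : forall p, smem X (s p)) by (intros; apply bss_mem_fsum_seq; auto).
  induction Hpq as [|q Hpq IH].
  - replace (ssub (s p) (s p)) with zero_seq by (extensionality i; unfold ssub, zero_seq; ring).
    rewrite bss_norm_zero. lra.
  - replace (ssub (s (S q)) (s p)) with (sadd (ssub (s q) (s p)) (sscal ((/2)^q) (zs q)))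
      by (extensionality i; unfold sadd, ssub, sscal, s, fsum_seq; simpl; ring).
    assert (Hq : 0 < (/2)^q) by (apply pow_lt; lra).
    eapply Rle_trans; [apply bss_norm_triang; [apply bss_mem_sub|apply bss_mem_scal]; auto|].
    rewrite bss_norm_scal, Rabs_pos_eq by (auto; lra). simpl.
    assert ((/2)^q * snorm X (zs q) <= (/2)^q) by (specialize (Hn q); nra).
    lra.
Qed.

Lemma bss_gliding_hump ys : (forall k, smem X (ys k)) -> (forall k, snorm X (ys k) <= 1) ->
  exists Y, smem X Y /\ forall k i, (/2)^k * Rabs (ys k i) <= Y i.
Proof.
  intros Hy Hn. set (zs := fun k i => Rabs (ys k i)).
  assert (Hz : forall k, smem X (zs k)) by (intros; apply bss_mem_abs; auto).
  assert (Hzn : forall k, snorm X (zs k) <= 1) by (intros; eapply Rle_trans; [apply bss_mem_abs|]; auto).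
  set (s := fun p => fsum_seq p (fun k => (/2)^k) zs).
  assert (Hs : forall p, smem X (s p)) by (intros; apply bss_mem_fsum_seq; auto).
  destruct (bss_complete s Hs) as [Y [HY HYc]].
  { intros eps Heps.
    destruct (pow_lt_1_zero (/2) ltac:(rewrite Rabs_pos_eq; lra) (eps / 2) ltac:(lra)) as [N HN].
    exists N. intros p q Hp Hq.
    assert (Hpos : forall n, 0 < (/2)^n) by (intros; apply pow_lt; lra).
    pose proof (HN p Hp); pose proof (HN q Hq); pose proof (Hpos p); pose proof (Hpos q).
    rewrite !Rabs_pos_eq in * by lra.
    destruct (Nat.le_ge_cases p q) as [Hpq|Hpq].
    - rewrite bss_norm_sub_sym by auto. pose proof (geometric_partial_sums_le zs p q Hz Hzn Hpq).
      unfold s. lra.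
    - pose proof (geometric_partial_sums_le zs q p Hz Hzn Hpq). unfold s. lra. }
  exists Y. split; auto. intros k i.
  assert (Hterm : forall k, 0 <= (/2)^k * zs k i)
    by (intros; apply Rmult_le_pos; [apply pow_le; lra|apply Rabs_pos]).
  apply Rle_trans with (s (S k) i).
  - apply (term_le_fsum (S k) (fun k => (/2)^k * zs k i)); auto.
  - apply (is_lim_seq_incr_compare (fun p => s p i)); [apply norm_cv_coord; auto|].
    intros n. unfold s, fsum_seq. simpl. specialize (Hterm n). lra.
Qed.

Lemma bss_ball_to_norm (P : seq -> R) L : 0 <= L ->
  (forall c x, 0 < c -> smem X x -> P (sscal c x) = c * P x) ->
  (forall x, smem X x -> snorm X x <= 1 -> P x <= L) ->
  forall x, smem X x -> P x <= L * snorm X x.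
Proof.
  intros HL Hhom Hball x Hx. apply Rle_of_shift; auto. intros d Hd.
  pose proof (bss_norm_pos _ Hx). set (c := snorm X x + d).
  replace x with (sscal c (sscal (/ c) x)) at 1
    by (extensionality i; unfold sscal; field; unfold c; lra).
  rewrite Hhom by (unfold c; try apply bss_mem_scal; auto; lra).
  fold c. rewrite (Rmult_comm L c). apply Rmult_le_compat_l; [unfold c; lra|].
  apply Hball; [apply bss_mem_scal; auto|].
  rewrite bss_norm_scal, Rabs_pos_eq by (auto; left; apply Rinv_0_lt_compat; unfold c; lra).
  apply Rmult_le_reg_l with c; [unfold c; lra|]. field_simplify; unfold c; lra.
Qed.

End BanachSequenceSpace.

(** * Koethe duals and multipliers *)

Lemma kothe_mem_zero Y : smem (kothe Y) zero_seq.
Proof.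
  intros x _. apply (ex_series_ext (fun _ => 0));
    [|exists 0; apply (is_series_single (fun _ => 0) 0); auto].
  intros n. unfold smul, zero_seq. rewrite Rmult_0_l, Rabs_R0. reflexivity.
Qed.

Lemma Series_abs_scal c a : 0 <= c ->
  Series (fun n => Rabs (c * a n)) = c * Series (fun n => Rabs (a n)).
Proof.
  intros Hc. rewrite <- Series_scal_l. apply Series_ext. intros n. rewrite Rabs_mult, Rabs_pos_eq; auto.
Qed.

Section KotheDual.
Variable Y : sspace.
Hypothesis HY : BSS Y.
Hypothesis unitv_mem : forall i, smem Y (unitv i).

(* Otherwise the violators of the bounds [k 2^k] would sum, by [bss_gliding_hump], to an
   [x] in [Y] with [sum_n |z_n x_n|] infinite. *)
Lemma kothe_ball_bound z : smem (kothe Y) z ->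
  exists B, forall x, smem Y x -> snorm Y x <= 1 -> Series (fun n => Rabs (z n * x n)) <= B.
Proof.
  intros Hz. apply NNPP. intros Hno.
  assert (Hk : forall k : nat, exists x, smem Y x /\ snorm Y x <= 1 /\
                 INR k < (/2)^k * Series (fun n => Rabs (z n * x n))).
  { intros k. apply NNPP. intros Hk. apply Hno. exists (INR k * 2^k). intros x Hx Hx1.
    apply Rnot_lt_le. intros Hlt. apply Hk. exists x. repeat split; auto.
    apply Rmult_lt_reg_l with (2^k); [apply pow_lt; lra|].
    rewrite <- Rmult_assoc, <- Rpow_mult_distr, Rinv_r, pow1 by lra. lra. }
  apply functional_choice in Hk. destruct Hk as [xs Hxs].
  destruct (bss_gliding_hump Y HY unitv_mem xs) as [Yv [HYv HYb]]; try apply Hxs.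
  destruct (INR_unbounded (Series (fun n => Rabs (z n * Yv n)))) as [k Hk].
  destruct (Hxs k) as [_ [_ Hgt]].
  rewrite <- Series_abs_scal in Hgt by (apply pow_le; lra).
  enough (Series (fun n => Rabs ((/2)^k * (z n * xs k n))) <= Series (fun n => Rabs (z n * Yv n)))
    by lra.
  apply Series_le; [|apply (Hz Yv HYv)]. intros n. split; [apply Rabs_pos|].
  rewrite !Rabs_mult, (Rabs_pos_eq ((/2)^k)) by (apply pow_le; lra).
  specialize (HYb k n). pose proof (RRle_abs (Yv n)). pose proof (Rabs_pos (z n)).
  replace ((/2)^k * (Rabs (z n) * Rabs (xs k n))) with (Rabs (z n) * ((/2)^k * Rabs (xs k n))) by ring.
  apply Rmult_le_compat_l; lra.
Qed.

Lemma kothe_holder z : smem (kothe Y) z ->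
  0 <= snorm (kothe Y) z /\
  forall x, smem Y x -> Series (fun n => Rabs (z n * x n)) <= snorm (kothe Y) z * snorm Y x.
Proof.
  intros Hz. destruct (kothe_ball_bound z Hz) as [B HB].
  set (E := fun r => exists x, smem Y x /\ snorm Y x <= 1 /\ r = snorm l1 (smul z x)).
  change (snorm (kothe Y) z) with (real (Lub_Rbar E)).
  destruct (Lub_Rbar_correct E) as [Hub Hlub].
  assert (H0 : Rbar_le 0 (Lub_Rbar E)).
  { apply Hub. exists zero_seq. rewrite bss_norm_zero by auto.
    repeat split; [apply bss_mem_zero; auto|lra|].
    simpl. rewrite <- Series_0. apply Series_ext. intros n. unfold smul, zero_seq.
    rewrite Rmult_0_r, Rabs_R0. reflexivity. }
  assert (H1 : Rbar_le (Lub_Rbar E) B) by (apply Hlub; intros r [x [Hx [Hx1 ->]]]; apply HB; auto).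
  destruct (Lub_Rbar E) as [L| |]; simpl in H0, H1 |- *; try contradiction.
  split; auto. apply (bss_ball_to_norm Y HY (fun x => Series (fun n => Rabs (z n * x n)))); auto.
  - intros c x Hc _. rewrite <- Series_abs_scal by lra.
    apply Series_ext. intros n. unfold sscal. f_equal; ring.
  - intros x Hx Hx1. apply (Hub (Series (fun n => Rabs (z n * x n)))). exists x. auto.
Qed.

Lemma kothe_gliding_hump zs : (forall k, smem (kothe Y) (zs k)) ->
  (forall k x, smem Y x -> Series (fun n => Rabs (zs k n * x n)) <= snorm Y x) ->
  exists Z, smem (kothe Y) Z /\ forall k i, (/2)^k * Rabs (zs k i) <= Z i.
Proof.
  intros Hz Hball.
  set (t := fun i k => (/2)^k * Rabs (zs k i)).
  assert (Ht0 : forall i k, 0 <= t i k)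
    by (intros; apply Rmult_le_pos; [apply pow_le; lra|apply Rabs_pos]).
  assert (Hte : forall i, ex_series (t i)).
  { intros i.
    apply (@ex_series_le R_AbsRing R_CompleteNormedModule _ (fun k => snorm Y (unitv i) * (/2)^k));
      [|eexists; apply is_series_geom_half].
    intros k. change (norm (t i k)) with (Rabs (t i k)). rewrite Rabs_pos_eq by auto.
    unfold t. rewrite (Rmult_comm (snorm _ _)). apply Rmult_le_compat_l; [apply pow_le; lra|].
    rewrite <- (Series_unitv (zs k) i). apply Hball, unitv_mem. }
  exists (fun i => Series (t i)). split; [|intros; apply (term_le_Series (t i)); auto].
  intros x Hx. unfold smul.
  apply (ex_series_of_fsum_bounded _ (2 * snorm Y x)); [intros; apply Rabs_pos|]. intros N.
  assert (Hex : forall i, ex_series (fun k => t i k * Rabs (x i)))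
    by (intros; apply ex_series_scal_r, Hte).
  rewrite (fsum_ext N _ (fun i => Series (fun k => t i k * Rabs (x i)))).
  2:{ intros i _. rewrite Series_scal_r, Rabs_mult, Rabs_pos_eq; [reflexivity|].
      apply Rle_trans with (t i 0%nat); [auto|apply term_le_Series; auto]. }
  destruct (Series_fsum N (fun i k => t i k * Rabs (x i)) Hex) as [_ <-].
  rewrite <- (is_series_unique _ _ (is_series_geom_half (snorm Y x))).
  apply Series_le; [|eexists; apply is_series_geom_half]. intros k.
  split; [apply fsum_nonneg; intros; apply Rmult_le_pos; auto; apply Rabs_pos|].
  rewrite (fsum_ext N _ (fun i => (/2)^k * Rabs (zs k i * x i)))
    by (intros; unfold t; rewrite Rabs_mult; ring).
  rewrite fsum_scal_l, (Rmult_comm (snorm Y x)). apply Rmult_le_compat_l; [apply pow_le; lra|].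
  eapply Rle_trans; [apply fsum_le_Series|apply Hball]; auto; [intros; apply Rabs_pos|apply (Hz k x Hx)].
Qed.

End KotheDual.

Lemma kothe_mem_scal Y c z : smem (kothe Y) z -> smem (kothe Y) (sscal c z).
Proof.
  intros Hz x Hx. apply (ex_series_ext (fun n => Rabs c * Rabs (z n * x n))).
  - intros n. unfold smul, sscal. rewrite <- Rabs_mult. f_equal; ring.
  - apply (@ex_series_scal_l R_AbsRing R_NormedModule), (Hz x Hx).
Qed.

Section Multiplier.
Variables Y1 Y2 : sspace.
Hypotheses (HY1 : BSS Y1) (HY2 : BSS Y2).
Hypotheses (unitv_mem1 : forall i, smem Y1 (unitv i)) (unitv_mem2 : forall i, smem Y2 (unitv i)).
Variable g : seq.
Hypothesis Hg : smem (mult_space Y2 (kothe (kothe Y1))) g.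

(* The gliding hump of [kothe_ball_bound], run simultaneously in [Y2] and in [kothe Y1]. *)
Lemma mult_ball_bound : exists M, forall y z N, smem Y2 y -> snorm Y2 y <= 1 ->
  smem (kothe Y1) z -> (forall x, smem Y1 x -> Series (fun n => Rabs (z n * x n)) <= snorm Y1 x) ->
  fsum N (fun i => Rabs (g i * y i * z i)) <= M.
Proof.
  apply NNPP. intros Hno.
  assert (Hk : forall k : nat, exists p : seq * seq * nat,
    let '(y, z, N) := p in
    smem Y2 y /\ snorm Y2 y <= 1 /\ smem (kothe Y1) z /\
    (forall x, smem Y1 x -> Series (fun n => Rabs (z n * x n)) <= snorm Y1 x) /\
    INR k < (/2)^k * (/2)^k * fsum N (fun i => Rabs (g i * y i * z i))).
  { intros k. apply NNPP. intros Hk. apply Hno. exists (INR k * 2^k * 2^k).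
    intros y z N Hy Hy1 Hz Hz1. apply Rnot_lt_le. intros Hlt. apply Hk. exists (y, z, N).
    repeat split; auto. assert (E : (/2)^k * 2^k = 1) by (rewrite <- Rpow_mult_distr, Rinv_l, pow1; lra).
    apply Rmult_lt_compat_l with (r := (/2)^k * (/2)^k) in Hlt;
      [|apply Rmult_lt_0_compat; apply pow_lt; lra].
    replace ((/2)^k * (/2)^k * (INR k * 2^k * 2^k))
      with (INR k * ((/2)^k * 2^k) * ((/2)^k * 2^k)) in Hlt by ring.
    rewrite E in Hlt. lra. }
  apply functional_choice in Hk. destruct Hk as [P HP].
  set (ys := fun k => fst (fst (P k))). set (zs := fun k => snd (fst (P k))).
  destruct (bss_gliding_hump Y2 HY2 unitv_mem2 ys) as [Yv [HYv HYb]];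
    [intros k; unfold ys; specialize (HP k); destruct (P k) as [[y z] N]; apply HP..|].
  destruct (kothe_gliding_hump Y1 unitv_mem1 zs) as [Zv [HZv HZb]];
    [intros k; unfold zs; specialize (HP k); destruct (P k) as [[y z] N]; apply HP..|].
  pose proof (Hg Yv HYv Zv HZv) as Hex.
  destruct (INR_unbounded (Series (fun n => Rabs (g n * Yv n * Zv n)))) as [k Hk].
  specialize (HYb k). specialize (HZb k). specialize (HP k). unfold ys, zs in *.
  destruct (P k) as [[y z] N]. simpl in *. destruct HP as [_ [_ [_ [_ Hgt]]]].
  enough ((/2)^k * (/2)^k * fsum N (fun i => Rabs (g i * y i * z i))
          <= Series (fun n => Rabs (g n * Yv n * Zv n))) by lra.
  eapply Rle_trans; [|apply (fsum_le_Series _ N); [intros; apply Rabs_pos|exact Hex]].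
  rewrite <- fsum_scal_l. apply fsum_le. intros i _. rewrite !Rabs_mult.
  specialize (HYb i). specialize (HZb i). pose proof (RRle_abs (Yv i)). pose proof (RRle_abs (Zv i)).
  replace ((/2)^k * (/2)^k * (Rabs (g i) * Rabs (y i) * Rabs (z i)))
    with (Rabs (g i) * ((/2)^k * Rabs (y i)) * ((/2)^k * Rabs (z i))) by ring.
  apply Rmult_le_compat; [| |apply Rmult_le_compat_l; [apply Rabs_pos|lra]|lra];
    repeat apply Rmult_le_pos; try apply Rabs_pos; apply pow_le; lra.
Qed.

Lemma mult_bilinear_bound : exists M, 0 < M /\ forall y z N, smem Y2 y -> smem (kothe Y1) z ->
  fsum N (fun i => Rabs (g i * y i * z i)) <= M * snorm Y2 y * snorm (kothe Y1) z.
Proof.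
  destruct mult_ball_bound as [M0 HM0]. exists (Rabs M0 + 1). split; [pose proof (Rabs_pos M0); lra|].
  intros y z N Hy Hz. destruct (kothe_holder Y1 HY1 unitv_mem1 z Hz) as [Hnz Hholder].
  (* Instead of proving the Koethe norm homogeneous, rescale [z] by [|z| + d] and let [d -> 0]. *)
  apply Rle_of_shift; [apply Rmult_le_pos; [pose proof (Rabs_pos M0)|apply bss_norm_pos]; auto; lra|].
  intros d Hd. set (c := snorm (kothe Y1) z + d). assert (Hc : 0 < c) by (unfold c; lra).
  set (z' := sscal (/ c) z).
  assert (Ez : forall i, Rabs (g i * y i * z i) = c * Rabs (g i * y i * z' i)).
  { intros i. unfold z', sscal. rewrite <- (Rabs_pos_eq c) at 1 by lra.
    rewrite <- Rabs_mult. f_equal. field. lra. }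
  rewrite (fsum_ext N _ _ (fun i _ => Ez i)), fsum_scal_l, (Rmult_comm _ c).
  apply Rmult_le_compat_l; [lra|].
  apply (bss_ball_to_norm Y2 HY2 (fun y => fsum N (fun i => Rabs (g i * y i * z' i))));
    [pose proof (Rabs_pos M0); lra| | |exact Hy].
  - intros a x Ha _. rewrite <- fsum_scal_l. apply fsum_ext. intros i _. unfold sscal.
    rewrite <- (Rabs_pos_eq a) at 2 by lra. rewrite <- Rabs_mult. f_equal. ring.
  - intros x Hx Hx1. eapply Rle_trans; [apply HM0; auto|pose proof (RRle_abs M0); lra].
    + apply kothe_mem_scal; auto.
    + intros v Hv. unfold z', sscal.
      rewrite (Series_ext _ (fun n => Rabs (/ c * (z n * v n)))) by (intros; f_equal; ring).
      rewrite Series_abs_scal by (left; apply Rinv_0_lt_compat; lra).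
      apply Rmult_le_reg_l with c; auto. rewrite <- Rmult_assoc, Rinv_r, Rmult_1_l by lra.
      eapply Rle_trans; [apply Hholder; auto|]. apply Rmult_le_compat_r; [apply bss_norm_pos; auto|].
      pose proof (bss_norm_pos Y1 HY1 v Hv). unfold c. lra.
Qed.

End Multiplier.

(** * The pi-product *)

Lemma le_abs_series u N : Rbar_le (fsum N (fun n => Rabs (u n))) (abs_series u).
Proof.
  apply (Lub_Rbar_correct (fun s => exists N, s = fsum N (fun n => Rabs (u n)))). exists N; auto.
Qed.

Lemma abs_series_approx v u d : Rbar_le (Rabs v) (abs_series u) -> 0 < d ->
  exists K, Rabs v - d <= fsum K (fun n => Rabs (u n)).
Proof.
  intros Hv Hd. apply NNPP. intros Hno.
  assert (Hub : Rbar_le (abs_series u) (Rabs v - d)).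
  { apply (Lub_Rbar_correct (fun s => exists N, s = fsum N (fun n => Rabs (u n)))).
    intros s [N ->]. simpl. apply Rnot_lt_le. intros Hlt. apply Hno. exists N. lra. }
  pose proof (Rbar_le_trans _ _ _ Hv Hub). simpl in *. lra.
Qed.

Lemma pi_norm_le_rep X Y V f w : pi_rep X Y V f w ->
  Rbar_le (pi_norm X Y V) (Series (fun n => snorm X (f n) * snorm Y (w n))).
Proof.
  intros H. apply (Glb_Rbar_correct (fun c => exists f g, pi_rep X Y V f g /\
    c = Series (fun n => snorm X (f n) * snorm Y (g n)))). exists f, w. auto.
Qed.

Lemma pi_norm_le_mul X Y V y z : BSS X -> smem Y zero_seq -> smem X y -> smem Y z ->
  (forall i, Rabs (V i) <= Rabs (y i * z i)) -> Rbar_le (pi_norm X Y V) (snorm X y * snorm Y z).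
Proof.
  intros HX HY0 Hy Hz HV.
  set (f := fun n : nat => if Nat.eqb n 0 then y else zero_seq).
  set (w := fun n : nat => if Nat.eqb n 0 then z else zero_seq).
  assert (Hs : is_series (fun n => snorm X (f n) * snorm Y (w n)) (snorm X y * snorm Y z)).
  { apply (is_series_single (fun n => snorm X (f n) * snorm Y (w n)) 0).
    intros n Hn. unfold f. destruct (Nat.eqb_spec n 0); [lia|]. rewrite bss_norm_zero by auto. ring. }
  rewrite <- (is_series_unique _ _ Hs). apply pi_norm_le_rep.
  repeat split; [intros n; unfold f; destruct (Nat.eqb n 0); auto; apply bss_mem_zero; auto|
                 intros n; unfold w; destruct (Nat.eqb n 0); auto|eexists; exact Hs|].
  intros i. eapply Rbar_le_trans; [|apply (le_abs_series _ 1)]. simpl. rewrite Rplus_0_l. apply HV.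
Qed.

Lemma Rbar_le_mult_finite (C L V : R) (P : Rbar) : 0 < C ->
  Rbar_le L (Rbar_mult C P) -> Rbar_le P V -> L <= C * V.
Proof.
  intros HC H1 H2. destruct P as [p| |]; simpl in *; try contradiction.
  - apply Rle_trans with (C * p); auto. apply Rmult_le_compat_l; lra.
  - revert H1. unfold Rbar_mult, Rbar_mult'.
    destruct (Rle_dec 0 C); [|lra]. destruct (Rle_lt_or_eq_dec 0 C r); simpl; [tauto|lra].
Qed.

Lemma le_mult_pi_norm X Y V (L M : R) : 0 < M ->
  (forall f w, pi_rep X Y V f w -> L <= M * Series (fun n => snorm X (f n) * snorm Y (w n))) ->
  Rbar_le L (Rbar_mult M (pi_norm X Y V)).
Proof.
  intros HM H.
  assert (HLM : Rbar_le (L / M) (pi_norm X Y V)).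
  { apply Glb_Rbar_correct. intros c [f [w [Hrep ->]]]. simpl.
    apply Rmult_le_reg_l with M; auto. replace (M * (L / M)) with L by (field; lra). auto. }
  destruct (pi_norm X Y V) as [p| |]; simpl in HLM |- *; try contradiction.
  - apply Rmult_le_reg_l with (/ M); [apply Rinv_0_lt_compat; auto|].
    rewrite <- Rmult_assoc, Rinv_l, Rmult_1_l by lra. rewrite Rmult_comm. exact HLM.
  - unfold Rbar_mult, Rbar_mult'. destruct (Rle_dec 0 M); [|lra].
    destruct (Rle_lt_or_eq_dec 0 M r); simpl; [auto|lra].
Qed.

Lemma pi_rep_mult_bound X Y g M V f w :
  (forall y, smem X y -> 0 <= snorm X y) -> (forall z, smem Y z -> 0 <= snorm Y z) ->
  (forall y z N, smem X y -> smem Y z ->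
     fsum N (fun i => Rabs (g i * y i * z i)) <= M * snorm X y * snorm Y z) ->
  0 <= M -> pi_rep X Y V f w ->
  forall n, fsum n (fun i => Rabs (g i * V i)) <= M * Series (fun k => snorm X (f k) * snorm Y (w k)).
Proof.
  intros HXp HYp HM HM0 [Hf [Hw [Hex HV]]] n.
  apply (Rle_of_slack _ _ (fsum n (fun i => Rabs (g i)))); [apply fsum_nonneg; intros; apply Rabs_pos|].
  intros d Hd.
  destruct (bounded_below_all n (fun i K => Rabs (V i) - d <= fsum K (fun k => Rabs (f k i * w k i))))
    as [K HK].
  { intros i K K' HKK' H. eapply Rle_trans; [apply H|apply fsum_le_len; auto]. intros; apply Rabs_pos. }
  { intros i. apply abs_series_approx; auto. }
  replace (fsum n (fun i => Rabs (g i * V i)))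
    with (fsum n (fun i => Rabs (g i) * (Rabs (V i) - d)) + d * fsum n (fun i => Rabs (g i)))
    by (rewrite <- fsum_scal_l, <- fsum_plus; apply fsum_ext; intros; rewrite Rabs_mult; ring).
  apply Rplus_le_compat_r.
  apply Rle_trans with (fsum n (fun i => fsum K (fun k => Rabs (g i * f k i * w k i)))).
  { apply fsum_le. intros i Hi. rewrite (fsum_ext K _ (fun k => Rabs (g i) * Rabs (f k i * w k i)))
      by (intros; rewrite <- Rabs_mult; f_equal; ring).
    rewrite fsum_scal_l. apply Rmult_le_compat_l; [apply Rabs_pos|apply HK; auto]. }
  rewrite fsum_swap.
  apply Rle_trans with (fsum K (fun k => M * (snorm X (f k) * snorm Y (w k)))).
  { apply fsum_le. intros k _. rewrite <- Rmult_assoc. apply HM; auto. }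
  rewrite fsum_scal_l. apply Rmult_le_compat_l; auto. apply fsum_le_Series; auto.
  intros k. apply Rmult_le_pos; auto.
Qed.

(** * Operators and their matrices *)

Section Operators.
Variables X Y : sspace.
Hypotheses (HX : BSS X) (HY : BSS Y).
Variable T : seq -> seq.
Hypothesis HT : bounded_linear X Y T.

Lemma unitv_expansion x : schauder_basis X unitv -> smem X x ->
  norm_cv X (fun K => fsum_seq K x unitv) x.
Proof.
  intros [Hu Hb] Hx. destruct (Hb x Hx) as [c [Hc _]].
  set (s := fun K => fsum_seq K c unitv).
  assert (Hs : forall K, smem X (s K)) by (intros; apply bss_mem_fsum_seq; auto).
  assert (Hcv : norm_cv X s x).
  { intros eps Heps. destruct (Hc eps Heps) as [N HN]. exists N. intros p Hp.
    rewrite (bss_norm_sub_sym X HX); auto. apply HN; lia. }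
  assert (Ecx : forall i, c i = x i).
  { intros i. apply (is_lim_seq_unique_R (fun p => s p i)); [|apply (norm_cv_coord X HX Hu); auto].
    apply is_lim_seq_ext_loc with (fun _ => c i); [|apply is_lim_seq_const].
    exists (S i). intros p Hp. unfold s, fsum_seq. rewrite fsum_unitv.
    destruct (Nat.ltb_spec i p); [reflexivity|lia]. }
  replace (fun K => fsum_seq K x unitv) with s; auto.
  extensionality K. extensionality i. apply fsum_ext. intros k _. rewrite Ecx. reflexivity.
Qed.

Lemma bounded_linear_zero : T zero_seq = zero_seq.
Proof.
  destruct HT as [_ [_ [Hs _]]].
  replace zero_seq with (sscal 0 zero_seq) by (extensionality i; unfold sscal, zero_seq; ring).
  rewrite Hs by (apply bss_mem_zero; auto). extensionality i. unfold sscal; ring.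
Qed.

Lemma bounded_linear_sub u v : smem X u -> smem X v -> T (ssub u v) = ssub (T u) (T v).
Proof.
  destruct HT as [_ [Ha [Hs _]]]. intros Hu Hv.
  assert (E : forall a b, ssub a b = sadd a (sscal (-1) b))
    by (intros; extensionality i; unfold ssub, sadd, sscal; ring).
  rewrite !E, Ha, Hs; auto. apply bss_mem_scal; auto.
Qed.

Lemma bounded_linear_fsum_seq K c : (forall k, smem X (unitv k)) ->
  T (fsum_seq K c unitv) = fsum_seq K c (fun k => T (unitv k)).
Proof.
  intros Hu. destruct HT as [_ [Ha [Hs _]]]. induction K as [|K IH]; [apply bounded_linear_zero|].
  change (T (sadd (fsum_seq K c unitv) (sscal (c K) (unitv K)))
          = sadd (fsum_seq K c (fun k => T (unitv k))) (sscal (c K) (T (unitv K)))).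
  rewrite Ha, Hs, IH; auto; [apply bss_mem_fsum_seq|apply bss_mem_scal]; auto.
Qed.

Lemma bounded_linear_norm_cv s x : (forall p, smem X (s p)) -> smem X x -> norm_cv X s x ->
  norm_cv Y (fun p => T (s p)) (T x).
Proof.
  intros Hs Hx Hc eps Heps. destruct HT as [_ [_ [_ [K HK]]]].
  pose proof (Rabs_pos K) as HK0.
  destruct (Hc (eps / (Rabs K + 1))) as [N HN]; [apply Rdiv_lt_0_compat; lra|].
  exists N. intros p Hp. rewrite <- bounded_linear_sub by auto.
  pose proof (bss_norm_pos X HX _ (bss_mem_sub X HX _ _ (Hs p) Hx)).
  eapply Rle_lt_trans; [apply HK, bss_mem_sub; auto|].
  apply Rle_lt_trans with ((Rabs K + 1) * snorm X (ssub (s p) x)).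
  - apply Rmult_le_compat_r; auto. pose proof (RRle_abs K); lra.
  - specialize (HN p Hp). apply Rmult_lt_reg_l with (/ (Rabs K + 1)); [apply Rinv_0_lt_compat; lra|].
    rewrite <- Rmult_assoc, Rinv_l, Rmult_1_l by lra. rewrite Rmult_comm. exact HN.
Qed.

Lemma op_matrix_expansion x i : schauder_basis X unitv -> (forall i, smem Y (unitv i)) -> smem X x ->
  is_lim_seq (fun K => fsum K (fun k => x k * op_matrix T i k)) (T x i).
Proof.
  intros Hb HuY Hx. pose proof (proj1 Hb) as HuX.
  assert (Hs : forall K, smem X (fsum_seq K x unitv)) by (intros; apply bss_mem_fsum_seq; auto).
  eapply is_lim_seq_ext; [|apply (norm_cv_coord Y HY HuY (fun K => T (fsum_seq K x unitv)))].
  - intros K. simpl. rewrite bounded_linear_fsum_seq by auto. reflexivity.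
  - intros K. apply HT; auto.
  - apply HT; auto.
  - apply bounded_linear_norm_cv; auto. apply unitv_expansion; auto.
Qed.

End Operators.

Definition matrix_factor (a b : nat -> nat -> R) (h g : seq) : Prop :=
  forall i j, a i j = g i * (h j * b i j).

Lemma matrix_factor_iff_ratio a b h g : matrix_factor a b h g <->
  forall i j, (b i j <> 0 -> a i j / b i j = g i * h j) /\ (b i j = 0 -> a i j = 0).
Proof.
  split; intros H i j.
  - rewrite H. split; intros Hb; [field; auto|rewrite Hb; ring].
  - destruct (H i j) as [H1 H2]. destruct (Req_dec (b i j) 0) as [E|E].
    + rewrite H2, E by auto. ring.
    + replace (a i j) with (a i j / b i j * b i j) by (field; auto). rewrite H1 by auto. ring.
Qed.

Lemma matrix_factor_of_factorization X1 X2 Y2 T S h g : bounded_linear X2 Y2 S ->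
  (forall j, smem X1 (unitv j)) -> (forall j, smem X2 (unitv j)) ->
  (forall x, smem X1 x -> T x = smul g (S (smul h x))) ->
  matrix_factor (op_matrix T) (op_matrix S) h g.
Proof.
  intros [_ [_ [HS _]]] Hu1 Hu2 HTS i j. unfold op_matrix. rewrite HTS by auto.
  replace (smul h (unitv j)) with (sscal (h j) (unitv j))
    by (extensionality k; unfold smul, sscal, unitv; destruct (Nat.eqb_spec k j); subst; ring).
  rewrite HS by auto. reflexivity.
Qed.

Lemma factorization_of_matrix_factor X1 X2 Y1 Y2 T S h g :
  BSS X1 -> BSS X2 -> BSS Y1 -> BSS Y2 ->
  schauder_basis X1 unitv -> schauder_basis X2 unitv ->
  (forall i, smem Y1 (unitv i)) -> (forall i, smem Y2 (unitv i)) ->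
  bounded_linear X1 Y1 T -> bounded_linear X2 Y2 S -> smem (mult_space X1 X2) h ->
  matrix_factor (op_matrix T) (op_matrix S) h g ->
  forall x, smem X1 x -> T x = smul g (S (smul h x)).
Proof.
  intros HX1 HX2 HY1 HY2 bX1 bX2 Hu1 Hu2 HT HS hh Hmat x Hx. extensionality i.
  pose proof (op_matrix_expansion X1 Y1 HX1 HY1 T HT x i bX1 Hu1 Hx) as LT.
  pose proof (op_matrix_expansion X2 Y2 HX2 HY2 S HS (smul h x) i bX2 Hu2 (hh x Hx)) as LS.
  apply (is_lim_seq_scal_l _ (g i)) in LS. unfold smul at 1.
  apply (is_lim_seq_unique_R _ _ _ LT). eapply is_lim_seq_ext; [|exact LS].
  intros K. simpl. rewrite <- fsum_scal_l. apply fsum_ext. intros k _.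
  unfold smul. rewrite (Hmat i k). ring.
Qed.

Lemma factorization_iff_matrix_factor X1 X2 Y1 Y2 T S h :
  BSS X1 -> BSS X2 -> BSS Y1 -> BSS Y2 ->
  schauder_basis X1 unitv -> schauder_basis X2 unitv ->
  (forall i, smem Y1 (unitv i)) -> (forall i, smem Y2 (unitv i)) ->
  bounded_linear X1 Y1 T -> bounded_linear X2 Y2 S -> smem (mult_space X1 X2) h ->
  forall g, (forall x, smem X1 x -> T x = smul g (S (smul h x))) <->
            matrix_factor (op_matrix T) (op_matrix S) h g.
Proof.
  intros HX1 HX2 HY1 HY2 bX1 bX2 Hu1 Hu2 HT HS hh g. split.
  - apply (matrix_factor_of_factorization X1 X2 Y2); auto; [apply bX1|apply bX2].
  - apply (factorization_of_matrix_factor X1 X2 Y1 Y2); auto.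
Qed.

(** * The matrix conditions *)

Lemma Rabs_div_le_1 p t : 0 < t -> Rabs p <= t -> Rabs (p / t) <= 1.
Proof.
  intros Ht Hp. unfold Rdiv. rewrite Rabs_mult, Rabs_inv, (Rabs_pos_eq t) by lra.
  apply Rmult_le_reg_r with t; auto. rewrite Rmult_assoc, Rinv_l by lra. lra.
Qed.

Section RowTest.
Variables a c : nat -> R.
Hypothesis Hrow : forall m r, (forall j, Rabs (r j) <= 1) ->
  fsum m (fun j => r j * c j) = 0 -> fsum m (fun j => r j * a j) <= 0.

Lemma row_test_pair j0 j u v : j0 <> j -> Rabs u <= 1 -> Rabs v <= 1 ->
  u * c j0 + v * c j = 0 -> u * a j0 + v * a j <= 0.
Proof.
  intros Hne Hu Hv Hc.
  set (r := fun k => (if Nat.eqb k j0 then u else 0) + (if Nat.eqb k j then v else 0)).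
  assert (Er : forall f, fsum (S (Nat.max j j0)) (fun k => r k * f k) = u * f j0 + v * f j).
  { intros f. rewrite <- !fsum_delta with (n := S (Nat.max j j0)) by lia.
    rewrite <- fsum_plus. apply fsum_ext. intros. unfold r. ring. }
  rewrite <- Er. apply Hrow; [|rewrite Er; auto].
  intros k. unfold r. destruct (Nat.eqb_spec k j0), (Nat.eqb_spec k j); try lia;
    rewrite ?Rplus_0_r, ?Rplus_0_l; auto; rewrite Rabs_R0; lra.
Qed.

(* Two-point tests give [c j * a j0 = c j0 * a j] for any column [j0] with [c j0 <> 0]. *)
Lemma row_proportional : exists g, (forall j, a j = g * c j) /\ (g <> 0 -> exists j, c j <> 0).
Proof.
  destruct (classic (exists j0, c j0 <> 0)) as [[j0 Hj0]|Hno].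
  - exists (a j0 / c j0). split; [|intros _; exists j0; auto]. intros j.
    destruct (Nat.eq_dec j0 j) as [<-|Hne]; [field; auto|].
    set (t := 1 + Rabs (c j) + Rabs (c j0)).
    pose proof (Rabs_pos (c j)). pose proof (Rabs_pos (c j0)). assert (Ht : 0 < t) by (unfold t; lra).
    assert (Hcj : Rabs (c j / t) <= 1) by (apply Rabs_div_le_1; unfold t; lra).
    assert (Hcj0 : Rabs (c j0 / t) <= 1) by (apply Rabs_div_le_1; unfold t; lra).
    assert (H1 := row_test_pair j0 j (c j / t) (- (c j0 / t)) Hne Hcj ltac:(rewrite Rabs_Ropp; auto)
                    ltac:(field; lra)).
    assert (H2 := row_test_pair j0 j (- (c j / t)) (c j0 / t) Hne ltac:(rewrite Rabs_Ropp; auto) Hcj0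
                    ltac:(field; lra)).
    assert (E : c j * a j0 = c j0 * a j).
    { apply Rmult_eq_reg_r with (/ t); [|apply Rinv_neq_0_compat; lra]. unfold Rdiv in H1, H2. lra. }
    apply Rmult_eq_reg_l with (c j0); auto. rewrite <- E. field. auto.
  - exists 0. split; [|lra]. intros j.
    assert (Hc : c j = 0) by (apply NNPP; intros Hc; apply Hno; exists j; auto).
    assert (H1 := row_test_pair (S j) j 0 1 ltac:(lia) ltac:(rewrite Rabs_R0; lra)
                    ltac:(rewrite Rabs_R1; lra) ltac:(rewrite Hc; ring)).
    assert (H2 := row_test_pair (S j) j 0 (-1) ltac:(lia) ltac:(rewrite Rabs_R0; lra)
                    ltac:(rewrite Rabs_m1; lra) ltac:(rewrite Hc; ring)).
    lra.
Qed.

End RowTest.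

Definition pi_dominated (Y2 Y1 : sspace) (a b : nat -> nat -> R) (h : seq) (C : R) : Prop :=
  forall (n m : nat) (r : nat -> nat -> R), (forall i j, Rabs (r i j) <= 1) ->
  Rbar_le (Finite (fsum n (fun i => fsum m (fun j => r i j * a i j))))
    (Rbar_mult (Finite C)
       (pi_norm Y2 (kothe Y1) (fsum_seq n (fun i => fsum m (fun j => h j * r i j * b i j)) unitv))).

Lemma fsum_single_row i F : (forall k, k <> i -> F k = 0) -> fsum (S i) F = F i.
Proof. intros H. simpl. rewrite fsum_eq_0; [ring|]. intros; apply H; lia. Qed.

(* For [gi = 0] the weight is [0 / 0 = 0] in Rocq, which is the value wanted there. *)
Lemma ratio_weight gi ci p : (gi <> 0 -> ci <> 0) ->
  Rabs (gi * p) / (gi * ci) * ci * gi = Rabs (gi * p) /\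
  Rabs (Rabs (gi * p) / (gi * ci) * ci) <= Rabs p.
Proof.
  intros Hc. destruct (Req_dec gi 0) as [->|Hg].
  - rewrite !Rmult_0_l, Rabs_R0. unfold Rdiv. rewrite Rmult_0_l, Rmult_0_l, Rabs_R0.
    split; [ring|apply Rabs_pos].
  - specialize (Hc Hg). split; [field; auto|].
    replace (Rabs (gi * p) / (gi * ci) * ci) with (Rabs (gi * p) / gi) by (field; auto).
    unfold Rdiv. rewrite Rabs_mult, Rabs_inv, Rabs_Rabsolu, Rabs_mult. right. field.
    intros E. apply Hg, Rabs_eq_0, E.
Qed.

Section PiDominated.
Variables Y1 Y2 : sspace.
Hypothesis HY2 : BSS Y2.
Variables (a b : nat -> nat -> R) (h : seq) (C : R).
Hypotheses (HC : 0 < C) (Hdom : pi_dominated Y2 Y1 a b h C).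

Lemma pi_dominated_rows : exists g,
  matrix_factor a b h g /\ forall i, g i <> 0 -> exists j, h j * b i j <> 0.
Proof.
  destruct (functional_choice (fun i gi => (forall j, a i j = gi * (h j * b i j)) /\
                                           (gi <> 0 -> exists j, h j * b i j <> 0))) as [g Hg].
  2:{ exists g. split; intros i; [intros j|]; apply Hg. }
  intros i. apply row_proportional. intros m r Hr Hz.
  specialize (Hdom (S i) m (fun i' j => if Nat.eqb i' i then r j else 0)). cbv beta in Hdom.
  rewrite fsum_single_row, Nat.eqb_refl in Hdom.
  2:{ intros k Hk. apply fsum_eq_0. intros. destruct (Nat.eqb_spec k i); [lia|ring]. }
  replace (fsum_seq (S i) _ unitv) with zero_seq in Hdom.
  - apply (Rbar_le_mult_finite C _ 0 _ HC) in Hdom;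
      [lra|intros; destruct (Nat.eqb i0 i); auto; rewrite Rabs_R0; lra|].
    eapply Rbar_le_trans; [apply (pi_norm_le_mul _ _ _ zero_seq zero_seq); auto|].
    + apply kothe_mem_zero.
    + apply bss_mem_zero; auto.
    + apply kothe_mem_zero.
    + intros k. unfold zero_seq. rewrite Rmult_0_l. lra.
    + rewrite bss_norm_zero by auto. simpl. lra.
  - extensionality k. unfold fsum_seq, zero_seq. symmetry. apply fsum_eq_0. intros i' _.
    destruct (Nat.eqb_spec i' i) as [->|].
    + rewrite (fsum_ext m _ (fun j => r j * (h j * b i j))), Hz by (intros; ring). ring.
    + rewrite fsum_eq_0; [ring|]. intros; ring.
Qed.

Lemma pi_dominated_diagonal N (J : nat -> nat) (u : nat -> R) :
  (forall i, (i < N)%nat -> Rabs (u i) <= 1) ->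
  Rbar_le (fsum N (fun i => u i * a i (J i)))
    (Rbar_mult C (pi_norm Y2 (kothe Y1)
       (fun k => if Nat.ltb k N then u k * (h (J k) * b k (J k)) else 0))).
Proof.
  intros Hu. destruct (bounded_below_all N (fun i m => (J i < m)%nat)) as [m Hm];
    [intros; lia|intros i; exists (S (J i)); lia|].
  set (r := fun i j => if Nat.ltb i N then (if Nat.eqb j (J i) then u i else 0) else 0).
  assert (Er : forall i (f : nat -> R), (i < N)%nat -> fsum m (fun j => r i j * f j) = u i * f (J i)).
  { intros i f Hi. rewrite <- (fsum_delta m (J i)) by auto. apply fsum_ext. intros j _. unfold r.
    destruct (Nat.ltb_spec i N); [reflexivity|lia]. }
  specialize (Hdom N m r).
  rewrite (fsum_ext N _ _ (fun i Hi => Er i (a i) Hi)) in Hdom.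
  replace (fun k => if Nat.ltb k N then u k * (h (J k) * b k (J k)) else 0)
    with (fsum_seq N (fun i => fsum m (fun j => h j * r i j * b i j)) unitv).
  - apply Hdom. intros i j. unfold r.
    destruct (Nat.ltb_spec i N), (Nat.eqb j (J i)); auto; rewrite Rabs_R0; lra.
  - extensionality k. unfold fsum_seq. rewrite fsum_unitv. destruct (Nat.ltb_spec k N); [|reflexivity].
    rewrite <- (Er k (fun j => h j * b k j)) by auto. apply fsum_ext. intros; ring.
Qed.

(* Test (c) on one entry [J i] per row with [h (J i) * b i (J i) <> 0], weighted so that the
   left side is [sum_i |g_i y_i z_i| / t] while the vector is dominated by [|y_i z_i| / t]. *)
Lemma pi_dominated_mult_space g : matrix_factor a b h g ->
  (forall i, g i <> 0 -> exists j, h j * b i j <> 0) -> smem (mult_space Y2 (kothe (kothe Y1))) g.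
Proof.
  intros Hmat Hsupp y Hy z Hz. simpl. unfold smul.
  destruct (functional_choice (fun i j => g i <> 0 -> h j * b i j <> 0)) as [J HJ].
  { intros i. destruct (Req_dec (g i) 0) as [E|E]; [exists 0%nat; tauto|].
    destruct (Hsupp i E) as [j Hj]. exists j; auto. }
  apply (ex_series_of_fsum_bounded _ (C * snorm Y2 y * snorm (kothe Y1) z)); [intros; apply Rabs_pos|].
  intros N. set (c := fun i => h (J i) * b i (J i)).
  set (q := fun i => Rabs (g i * (y i * z i)) / (g i * c i)).
  assert (Hw : forall i,
    q i * c i * g i = Rabs (g i * (y i * z i)) /\ Rabs (q i * c i) <= Rabs (y i * z i))
    by (intros; apply ratio_weight, HJ).
  set (t := 1 + fsum N (fun i => Rabs (q i))).
  assert (Ht : 0 < t)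
    by (pose proof (fsum_nonneg N (fun i => Rabs (q i)) (fun i => Rabs_pos _)); unfold t; lra).
  assert (Hu : forall i, (i < N)%nat -> Rabs (q i / t) <= 1).
  { intros i Hi. apply Rabs_div_le_1; auto.
    pose proof (term_le_fsum N (fun i => Rabs (q i)) i (fun i => Rabs_pos _) Hi). unfold t; lra. }
  pose proof (pi_dominated_diagonal N J (fun i => q i / t) Hu) as Hd.
  rewrite (fsum_ext N _ (fun i => / t * Rabs (g i * y i * z i))) in Hd.
  2:{ intros i _. rewrite Hmat. fold (c i).
      replace (g i * y i * z i) with (g i * (y i * z i)) by ring. rewrite <- (proj1 (Hw i)).
      unfold Rdiv. ring. }
  rewrite fsum_scal_l in Hd.
  apply (Rbar_le_mult_finite C _ (snorm Y2 (sscal (/ t) y) * snorm (kothe Y1) z) _ HC) in Hd.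
  - rewrite bss_norm_scal, Rabs_pos_eq in Hd by (auto; left; apply Rinv_0_lt_compat; auto).
    apply Rmult_le_reg_l with (/ t); [apply Rinv_0_lt_compat; auto|]. lra.
  - apply pi_norm_le_mul; auto; [apply kothe_mem_zero|apply bss_mem_scal; auto|].
    intros k. destruct (Nat.ltb_spec k N); [|rewrite Rabs_R0; apply Rabs_pos].
    unfold sscal.
    replace (q k / t * (h (J k) * b k (J k))) with (/ t * (q k * c k)) by (unfold c; field; lra).
    rewrite Rmult_assoc, !(Rabs_mult (/ t)), (Rabs_pos_eq (/ t)) by (left; apply Rinv_0_lt_compat; auto).
    apply Rmult_le_compat_l; [left; apply Rinv_0_lt_compat; auto|apply Hw].
Qed.

End PiDominated.

Lemma matrix_factor_pi_dominated Y1 Y2 a b h g : BSS Y1 -> BSS Y2 ->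
  (forall i, smem Y1 (unitv i)) -> (forall i, smem Y2 (unitv i)) ->
  smem (mult_space Y2 (kothe (kothe Y1))) g -> matrix_factor a b h g ->
  exists C, 0 < C /\ pi_dominated Y2 Y1 a b h C.
Proof.
  intros HY1 HY2 Hu1 Hu2 Hg Hmat.
  destruct (mult_bilinear_bound Y1 Y2 HY1 HY2 Hu1 Hu2 g Hg) as [M [HM0 HM]].
  exists M. split; auto. intros n m r Hr. apply le_mult_pi_norm; auto. intros f w Hrep.
  eapply Rle_trans; [|apply (pi_rep_mult_bound Y2 (kothe Y1) g M _ f w (bss_norm_pos Y2 HY2)
    (fun z Hz => proj1 (kothe_holder Y1 HY1 Hu1 z Hz)) HM (Rlt_le _ _ HM0) Hrep n)].
  apply fsum_le. intros i Hi. unfold fsum_seq. rewrite fsum_unitv.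
  destruct (Nat.ltb_spec i n); [|lia]. eapply Rle_trans; [|apply RRle_abs].
  rewrite <- fsum_scal_l. right. apply fsum_ext. intros. rewrite Hmat. ring.
Qed.

Definition row_dominated (a b : nat -> nat -> R) (h : seq) (C : R) : Prop :=
  forall (n m : nat) (r : nat -> R), (forall j, Rabs (r j) <= 1) ->
  fsum m (fun j => r j * a n j) <= C * Rabs (fsum m (fun j => h j * r j * b n j)).

Lemma row_dominated_factor a b h C : 0 < C -> row_dominated a b h C ->
  exists g, matrix_factor a b h g /\ forall n, Rabs (g n) <= C.
Proof.
  intros HC Hd.
  destruct (functional_choice (fun n gn => (forall j, a n j = gn * (h j * b n j)) /\ Rabs gn <= C))
    as [g Hg]; [|exists g; split; intros; [intros j|]; apply Hg].
  intros n. destruct (row_proportional (a n) (fun j => h j * b n j)) as [gn [Hgn Hsupp]].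
  { intros m r Hr Hz. specialize (Hd n m r Hr).
    rewrite (fsum_ext m (fun j => h j * r j * b n j) (fun j => r j * (h j * b n j))) in Hd
      by (intros; ring).
    rewrite Hz, Rabs_R0, Rmult_0_r in Hd. exact Hd. }
  exists gn. split; auto. destruct (Req_dec gn 0) as [->|E0]; [rewrite Rabs_R0; lra|].
  destruct (Hsupp E0) as [j Hj].
  assert (Hsg : forall u, Rabs u <= 1 -> u * (gn * (h j * b n j)) <= C * Rabs (u * (h j * b n j))).
  { intros u Hu. rewrite <- Hgn. specialize (Hd n (S j) (fun k => if Nat.eqb k j then u else 0)).
    rewrite (fsum_ext (S j) (fun k => h k * _ * b n k)
               (fun k => (if Nat.eqb k j then u else 0) * (h k * b n k)))
      in Hd by (intros; ring).
    rewrite !fsum_delta in Hd by lia. apply Hd.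
    intros k; destruct (Nat.eqb k j); auto; rewrite Rabs_R0; lra. }
  pose proof (Hsg 1 ltac:(rewrite Rabs_R1; lra)) as H1.
  pose proof (Hsg (-1) ltac:(rewrite Rabs_m1; lra)) as H2.
  rewrite Rabs_mult, Rabs_R1 in H1. rewrite Rabs_mult, Rabs_m1 in H2.
  apply Rmult_le_reg_r with (Rabs (h j * b n j)); [apply Rabs_pos_lt; auto|]. rewrite <- Rabs_mult.
  destruct (Rle_dec 0 (gn * (h j * b n j))); [rewrite Rabs_pos_eq|rewrite Rabs_left]; lra.
Qed.

Lemma matrix_factor_row_dominated a b h g B : matrix_factor a b h g -> (forall i, Rabs (g i) <= B) ->
  row_dominated a b h (Rabs B + 1).
Proof.
  intros Hmat HB n m r Hr.
  rewrite (fsum_ext m _ (fun j => g n * (h j * r j * b n j))) by (intros; rewrite Hmat; ring).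
  rewrite fsum_scal_l. eapply Rle_trans; [apply RRle_abs|]. rewrite Rabs_mult.
  apply Rmult_le_compat_r; [apply Rabs_pos|]. specialize (HB n). pose proof (RRle_abs B). lra.
Qed.

Lemma kothe_mem_dominated W u v B : smem (kothe W) v -> (forall i, Rabs (u i) <= B * Rabs (v i)) ->
  smem (kothe W) u.
Proof.
  intros Hv Huv x Hx.
  apply (@ex_series_le R_AbsRing R_CompleteNormedModule _ (fun n => B * Rabs (v n * x n))).
  - intros n. change (norm (Rabs (smul u x n))) with (Rabs (Rabs (smul u x n))).
    unfold smul. rewrite Rabs_Rabsolu, !Rabs_mult, <- Rmult_assoc.
    apply Rmult_le_compat_r; [apply Rabs_pos|apply Huv].
  - apply (@ex_series_scal_l R_AbsRing R_NormedModule), (Hv x Hx).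
Qed.

Lemma bounded_mem_mult_space Y1 Y2 g B : (forall y, smem Y2 y -> smem (kothe (kothe Y1)) y) ->
  (forall i, Rabs (g i) <= B) -> smem (mult_space Y2 (kothe (kothe Y1))) g.
Proof.
  intros Hsub HB y Hy. apply (kothe_mem_dominated _ _ y B); auto.
  intros i. unfold smul. rewrite Rabs_mult. apply Rmult_le_compat_r; auto. apply Rabs_pos.
Qed.

Lemma pi_dominated_factorization Y1 Y2 a b h : BSS Y2 ->
  (exists C, 0 < C /\ pi_dominated Y2 Y1 a b h C) ->
  exists g, smem (mult_space Y2 (kothe (kothe Y1))) g /\ matrix_factor a b h g.
Proof.
  intros HY2 [C [HC Hdom]]. destruct (pi_dominated_rows Y1 Y2 HY2 a b h C HC Hdom) as [g [Hmat Hsupp]].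
  exists g. split; auto. apply (pi_dominated_mult_space Y1 Y2 HY2 a b h C HC Hdom g Hmat Hsupp).
Qed.

Lemma row_dominated_factorization Y1 Y2 a b h : (forall y, smem Y2 y -> smem (kothe (kothe Y1)) y) ->
  (exists C, 0 < C /\ row_dominated a b h C) ->
  exists g, smem (mult_space Y2 (kothe (kothe Y1))) g /\ matrix_factor a b h g.
Proof.
  intros Hsub [C [HC Hd]]. destruct (row_dominated_factor a b h C HC Hd) as [g [Hmat Hg]].
  exists g. split; auto. apply (bounded_mem_mult_space Y1 Y2 g C); auto.
Qed.

Lemma factorization_row_dominated (G : sspace) a b h :
  (forall g, smem G g <-> exists B, forall i, Rabs (g i) <= B) ->
  (exists g, smem G g /\ matrix_factor a b h g) -> exists C, 0 < C /\ row_dominated a b h C.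
Proof.
  intros HG [g [Hg Hmat]]. destruct (proj1 (HG g) Hg) as [B HB].
  exists (Rabs B + 1). split; [pose proof (Rabs_pos B); lra|].
  apply (matrix_factor_row_dominated a b h g B); auto.
Qed.

Theorem proposition5p2
  (X1 X2 Y1 Y2 : sspace) (T S : seq -> seq) (h : seq)
  (HX1 : BSS X1) (HX2 : BSS X2) (HY1 : BSS Y1) (HY2 : BSS Y2)
  (sX1 : saturated X1) (sX2 : saturated X2) (sY1 : saturated Y1) (sY2 : saturated Y2)
  (bX1 : schauder_basis X1 unitv) (bX2 : schauder_basis X2 unitv)
  (bY1 : schauder_basis Y1 unitv) (bY2 : schauder_basis Y2 unitv)
  (bY1' : schauder_basis (kothe Y1) unitv)
  (HT : bounded_linear X1 Y1 T) (HS : bounded_linear X2 Y2 S)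
  (nT : nontrivial_op X1 T) (nS : nontrivial_op X2 S)
  (sat_mult : saturated (mult_space Y2 (kothe (kothe Y1))))
  (soc : sigma_order_continuous Y2 \/ sigma_order_continuous (kothe Y1))
  (hh : smem (mult_space X1 X2) h) :
  let a := op_matrix T in
  let b := op_matrix S in
  let G := mult_space Y2 (kothe (kothe Y1)) in
  let cond_a := exists g, smem G g /\
      forall x, smem X1 x -> T x = smul g (S (smul h x)) in
  let cond_b := exists g, smem G g /\
      forall i j, (b i j <> 0 -> a i j / b i j = g i * h j) /\
                  (b i j = 0 -> a i j = 0) in
  let cond_c := exists C, 0 < C /\
      forall (n m : nat) (r : nat -> nat -> R),
        (forall i j, Rabs (r i j) <= 1) ->
        Rbar_le (Finite (fsum n (fun i => fsum m (fun j => r i j * a i j))))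
          (Rbar_mult (Finite C)
             (pi_norm Y2 (kothe Y1)
                (fsum_seq n (fun i => fsum m (fun j => h j * r i j * b i j)) unitv))) in
  let cond_d := exists C, 0 < C /\
      forall (n m : nat) (r : nat -> R),
        (forall j, Rabs (r j) <= 1) ->
        fsum m (fun j => r j * a n j) <= C * Rabs (fsum m (fun j => h j * r j * b n j)) in
  (cond_a <-> cond_b) /\ (cond_b <-> cond_c) /\
  ((forall y, smem Y2 y -> smem (kothe (kothe Y1)) y) ->
     (cond_d -> cond_a) /\
     ((forall g, smem G g <-> exists B, forall i, Rabs (g i) <= B) ->
        (cond_d <-> cond_a))).
Proof.
  cbv zeta. pose proof (proj1 bY1) as HuY1. pose proof (proj1 bY2) as HuY2.
  setoid_rewrite (factorization_iff_matrix_factor X1 X2 Y1 Y2 T S h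
                    HX1 HX2 HY1 HY2 bX1 bX2 HuY1 HuY2 HT HS hh).
  setoid_rewrite <- matrix_factor_iff_ratio.
  split; [tauto|]. split; [split|].
  - intros [g [Hg Hmat]]. apply (matrix_factor_pi_dominated Y1 Y2 _ _ h g); auto.
  - apply pi_dominated_factorization; auto.
  - intros Hsub. pose proof (row_dominated_factorization Y1 Y2 (op_matrix T) (op_matrix S) h Hsub).
    split; [auto|]. intros HG. split; [auto|]. apply factorization_row_dominated; auto.
Qed.
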